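(* Assume $X$ satisfies the $G$-latent model with covariance $\Sigma=ACA^t+\Gamma$. If $\Delta(C)>\frac{2}{m}|\Gamma|_V$, then $B^*$ is the unique maximizer of $B\mapsto\langle\Sigma,B\rangle$ over $\mathcal{D}$.
   Context: Let $G=\{G_1,\dots,G_K\}$ be a partition of $[p]$ into nonempty groups, $k(a)$ the index with $a\in G_{k(a)}$, $m=\min_k|G_k|$. A centered random vector $X$ satisfies the $G$-latent model if $X_a=Z_{k(a)}+E_a$ for all $a$, where $Z\in\mathbb{R}^K$ is centered, $E\in\mathbb{R}^p$ is centered, independent of $Z$, with independent coordinates and $\mathrm{Var}(E_a)=\gamma_{k(a)}$. Then $\Sigma=\mathrm{Cov}(X)=ACA^t+\Gamma$ with $A_{ak}=1_{\{a\in G_k\}}$, $C=\mathrm{Cov}(Z)$, $\Gamma=\mathrm{diag}(\gamma_{k(a)})_a$. $\Delta(C)=\min_{j<k}(C_{jj}+C_{kk}-2C_{jk})$. For diagonal $D$, $|D|_V=\max_aD_{aa}-\min_aD_{aa}$. $B^*$ is the $p\times p$ matrix with $B^*_{ab}=1/|G_k|$ if $a,b\in G_k$ for some $k$, and $0$ otherwise. $\langle M,N\rangle=\mathrm{tr}(M^tN)$. $\mathcal{C}$ is the set of symmetric positive semidefinite $p\times p$ matrices $B$ with $\sum_aB_{ab}=1$ for all $b$, $B_{ab}\ge0$ for all $a,b$, and $\mathrm{tr}(B)=K$; $\mathcal{D}=\{B\in\mathcal{C}: B^2=B\}$. *)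

(* the statement is purely algebraic (about covariance
   matrices), stated over an arbitrary real field R. *)
From HB Require Import structures.
From mathcomp Require Import all_boot all_order all_algebra.
Set Implicit Arguments. Unset Strict Implicit. Unset Printing Implicit Defensive.
Import Order.TTheory GRing.Theory Num.Theory.
Local Open Scope ring_scope.

(* A partition of [p] into K groups is encoded by the group-index map
   kk : 'I_p -> 'I_K  (kk a = k(a)); group G_k = [set a | kk a == k]. *)
Definition group_of (p K : nat) (kk : 'I_p -> 'I_K) (k : 'I_K) : {set 'I_p} :=
  [set a | kk a == k].

(* m = min_k |G_k|  (default value p, only relevant when K = 0, i.e. p = 0) *)
Definition min_group_size (p K : nat) (kk : 'I_p -> 'I_K) : nat :=
  \big[minn/p]_(k : 'I_K) #|group_of kk k|.

Definition memb_mx (R : nzRingType) (p K : nat) (kk : 'I_p -> 'I_K) : 'M[R]_(p, K) :=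
  \matrix_(a, k) (kk a == k)%:R.

Definition noise_mx (R : nzRingType) (p K : nat) (kk : 'I_p -> 'I_K)
  (gamma : 'I_K -> R) : 'M[R]_p :=
  diag_mx (\row_a gamma (kk a)).

Definition latent_cov (R : nzRingType) (p K : nat) (kk : 'I_p -> 'I_K)
  (C : 'M[R]_K) (gamma : 'I_K -> R) : 'M[R]_p :=
  memb_mx R kk *m C *m (memb_mx R kk)^T + noise_mx kk gamma.

(* |D|_V = max_a D_aa - min_a D_aa  (0 when p = 0) *)
Definition var_seminorm (R : realFieldType) (p : nat) (D : 'M[R]_p) : R :=
  let s := [seq D a a | a <- enum 'I_p] in
  foldr Num.max (head 0 s) s - foldr Num.min (head 0 s) s.

Definition Bstar (R : fieldType) (p K : nat) (kk : 'I_p -> 'I_K) : 'M[R]_p :=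
  \matrix_(a, b) if kk a == kk b then (#|group_of kk (kk a)|%:R)^-1 else 0.

Definition frob (R : nzRingType) (p : nat) (M N : 'M[R]_p) : R := \tr (M^T *m N).

Definition psd (R : realFieldType) (n : nat) (M : 'M[R]_n) : Prop :=
  M^T = M /\ forall v : 'cV[R]_n, 0 <= (v^T *m M *m v) 0 0.

Definition in_Cset (R : realFieldType) (p K : nat) (B : 'M[R]_p) : Prop :=
  psd B /\ (forall b, \sum_a B a b = 1) /\ (forall a b, 0 <= B a b) /\ \tr B = K%:R.

Definition in_Dset (R : realFieldType) (p K : nat) (B : 'M[R]_p) : Prop :=
  in_Cset K B /\ B *m B = B.

(* Write d_k = tr_{G_k} B - 1 and o_k for the mass of B leaving the block G_k.
   For a symmetric idempotent B with unit row sums, the squared deviations of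
   the entries B_ca, a in G_k, from their row mean, summed over all rows c,
   equal d_k + o_k / |G_k|; so d_k >= -o_k / |G_k|, while tr B = K gives
   sum_k d_k = 0.  Hence the noise part of <Sigma, B*> - <Sigma, B> is at least
   -(|Gamma|_V / m) sum_k o_k, and the signal part equals the sum over
   off-block pairs (a, b) of (C_kk + C_ll - 2 C_kl) / 2 * B_ab, with k = k(a),
   l = k(b).  Under the separation condition every off-block entry of B thus
   carries a positive weight in <Sigma, B*> - <Sigma, B>, which is therefore
   nonnegative and vanishes only if B is block diagonal; a block diagonal B in
   D then has constant rows on each block, i.e. B = B*. *)

From HB Require Import structures.
From mathcomp Require Import all_boot all_order all_algebra.
From mathcomp Require Import ring lra.
Import Order.TTheory GRing.Theory Num.Theory.
Local Open Scope ring_scope.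

Set Implicit Arguments.
Unset Strict Implicit.
Unset Printing Implicit Defensive.

Lemma frobE (R : comNzRingType) p (M N : 'M[R]_p) :
  frob M N = \sum_a \sum_b M a b * N a b.
Proof.
rewrite /frob /mxtrace exchange_big; apply: eq_bigr => a _.
by rewrite mxE; apply: eq_bigr => b _; rewrite mxE.
Qed.

Lemma sym_idem_psd (R : realFieldType) n (B : 'M[R]_n) :
  B^T = B -> B *m B = B -> psd B.
Proof.
move=> Bsym Bidem; split=> // v.
have -> : v^T *m B *m v = (B *m v)^T *m (B *m v).
  by rewrite trmx_mul Bsym -mulmxA -[in LHS]Bidem -Bsym !mulmxA.
by rewrite mxE; apply: sumr_ge0 => i _; rewrite mxE -expr2 sqr_ge0.
Qed.

Lemma var_seminorm_diag (R : realFieldType) p (D : 'M[R]_p) :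
  exists g, forall a, 0 <= g - D a a <= var_seminorm D.
Proof.
set s := [seq D a a | a <- enum 'I_p].
have max_ge (r : seq R) x0 x : x \in r -> x <= foldr Num.max x0 r.
  elim: r => //= y r IHr; rewrite in_cons le_max => /predU1P[->|/IHr->];
    by rewrite ?lexx ?orbT.
have min_le (r : seq R) x0 x : x \in r -> foldr Num.min x0 r <= x.
  elim: r => //= y r IHr; rewrite in_cons ge_min => /predU1P[->|/IHr->];
    by rewrite ?lexx ?orbT.
exists (foldr Num.max (head 0 s) s) => a.
have Da : D a a \in s by apply: map_f; rewrite mem_enum.
rewrite subr_ge0 max_ge //= /var_seminorm -/s lerD2l lerN2.
exact: min_le.
Qed.

Lemma sum_sq_dev (R : realFieldType) (I : finType) (S : {set I}) (x : I -> R) :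
  (0 < #|S|)%N ->
  \sum_(i in S) (x i - (\sum_(j in S) x j) / #|S|%:R) ^+ 2 =
  \sum_(i in S) x i ^+ 2 - (\sum_(i in S) x i) ^+ 2 / #|S|%:R.
Proof.
move=> S_gt0; set t := _ / _; set n := #|S|%:R.
have n0 : n != 0 by rewrite pnatr_eq0 -lt0n.
under eq_bigr do rewrite sqrrB.
rewrite !big_split /= sumrN sumr_const -mulr_natr sumrMnl -mulr_suml /t -/n.
by field.
Qed.

Definition offmass (R : nzRingType) p (B : 'M[R]_p) (S : {set 'I_p}) : R :=
  \sum_(a in S) \sum_(b in ~: S) B a b.

Section StochasticProjection.

Variables (R : realFieldType) (p : nat) (B : 'M[R]_p).
Hypotheses (Bsym : B^T = B) (Bidem : B *m B = B)
  (Bcol : forall b, \sum_a B a b = 1).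

Lemma symmxE a b : B a b = B b a.
Proof. by rewrite -{1}Bsym mxE. Qed.

Lemma row_sum1 a : \sum_b B a b = 1.
Proof. by rewrite -(Bcol a); apply: eq_bigr => b _; rewrite symmxE. Qed.

Lemma idem_entry a b : B a b = \sum_c B c a * B c b.
Proof. by rewrite -{1}Bidem mxE; apply: eq_bigr => c _; rewrite symmxE. Qed.

Lemma sum_block_entries (S : {set 'I_p}) :
  \sum_(a in S) \sum_(b in S) B a b = #|S|%:R - offmass B S.
Proof.
rewrite -sumr_const -sumrB; apply: eq_bigr => a _.
rewrite -(row_sum1 a) [X in _ = X - _](bigID (mem S)) /=.
by under [X in _ = _ + X - _]eq_bigl do rewrite -in_setC; rewrite addrK.
Qed.

Lemma block_variance (S : {set 'I_p}) : (0 < #|S|)%N ->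
  \sum_c \sum_(a in S) (B c a - (\sum_(b in S) B c b) / #|S|%:R) ^+ 2 =
  \sum_(a in S) B a a - 1 + offmass B S / #|S|%:R.
Proof.
move=> S_gt0; under eq_bigr do rewrite sum_sq_dev //.
rewrite sumrB exchange_big -mulr_suml.
have -> : \sum_(a in S) \sum_c B c a ^+ 2 = \sum_(a in S) B a a.
  by apply: eq_bigr => a _; rewrite [RHS]idem_entry; under eq_bigr do rewrite expr2.
have -> : \sum_c (\sum_(a in S) B c a) ^+ 2 = #|S|%:R - offmass B S.
  rewrite -sum_block_entries; under eq_bigr do rewrite expr2 mulr_suml.
  rewrite exchange_big; apply: eq_bigr => a _.
  under eq_bigr do rewrite mulr_sumr.
  by rewrite exchange_big; apply: eq_bigr => b _; rewrite idem_entry.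
have n0 : #|S|%:R != 0 :> R by rewrite pnatr_eq0 -lt0n.
by field.
Qed.

Lemma block_variance_ge0 (S : {set 'I_p}) : (0 < #|S|)%N ->
  0 <= \sum_(a in S) B a a - 1 + offmass B S / #|S|%:R.
Proof.
move=> S_gt0; rewrite -block_variance //.
by apply: sumr_ge0 => c _; apply: sumr_ge0 => a _; apply: sqr_ge0.
Qed.

Lemma block_variance_eq0 (S : {set 'I_p}) : (0 < #|S|)%N ->
  \sum_(a in S) B a a - 1 + offmass B S / #|S|%:R = 0 ->
  forall c a, a \in S -> B c a = (\sum_(b in S) B c b) / #|S|%:R.
Proof.
move=> S_gt0; rewrite -block_variance // => var0 c a aS.
have row0 :=
  psumr_eq0P (fun c' _ => sumr_ge0 _ (fun a' _ => sqr_ge0 _)) var0 (i := c) isT.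
have /eqP := psumr_eq0P (fun a' _ => sqr_ge0 _) row0 aS.
by rewrite sqrf_eq0 subr_eq0 => /eqP.
Qed.

Lemma sym_weight_gap (f : 'I_p -> 'I_p -> R) : (forall a b, f a b = f b a) ->
  \sum_a f a a - \sum_a \sum_b f a b * B a b =
  \sum_a \sum_b (f a a + f b b - 2 * f a b) / 2 * B a b.
Proof.
move=> fsym; set X := \sum_a \sum_b (f a a - f a b) * B a b.
have -> : \sum_a f a a - \sum_a \sum_b f a b * B a b = X.
  rewrite -sumrB; apply: eq_bigr => a _.
  rewrite -[f a a in LHS]mulr1 -(row_sum1 a) mulr_sumr -sumrB.
  by apply: eq_bigr => b _; rewrite mulrBl.
have swapX : X = \sum_a \sum_b (f b b - f a b) * B a b.
  rewrite /X exchange_big; apply: eq_bigr => a _; apply: eq_bigr => b _.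
  by rewrite fsym symmxE.
have -> : \sum_a \sum_b (f a a + f b b - 2 * f a b) / 2 * B a b =
          (X + \sum_a \sum_b (f b b - f a b) * B a b) / 2.
  rewrite /X -big_split mulr_suml; apply: eq_bigr => a _.
  by rewrite -big_split mulr_suml; apply: eq_bigr => b _ /=; ring.
by rewrite -swapX; field.
Qed.

End StochasticProjection.

Lemma sum_delta (R : nzRingType) (I : finType) (x : I) (F : I -> R) :
  \sum_i (x == i)%:R * F i = F x.
Proof.
rewrite (bigD1 x) //= eqxx mul1r big1 ?addr0 // => i /negbTE.
by rewrite eq_sym => ->; rewrite mul0r.
Qed.

Lemma bigminn_le (I : eqType) (r : seq I) (x0 : nat) (F : I -> nat) i :
  i \in r -> (\big[minn/x0]_(j <- r) F j <= F i)%N.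
Proof.
elim: r => //= j r IHr; rewrite big_cons in_cons => /predU1P[->|/IHr].
  exact: geq_minl.
exact: leq_trans (geq_minr _ _).
Qed.

Lemma weighted_sum_le0_eq0 (R : realFieldType) (I : finType) (P : I -> I -> bool)
    (w x : I -> I -> R) :
  (forall i j, P i j -> 0 < w i j) -> (forall i j, 0 <= x i j) ->
  \sum_i \sum_(j | P i j) w i j * x i j <= 0 -> forall i j, P i j -> x i j = 0.
Proof.
move=> w_gt0 x_ge0 sum_le0 i j Pij.
have term_ge0 i' j' : P i' j' -> 0 <= w i' j' * x i' j'.
  by move=> Pij'; rewrite mulr_ge0 // ltW // w_gt0.
have sum0 : \sum_i \sum_(j | P i j) w i j * x i j = 0.
  apply/eqP; rewrite eq_le sum_le0 /=.
  by apply: sumr_ge0 => i' _; apply: sumr_ge0 => j'; apply: term_ge0.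
have row0 := psumr_eq0P (fun i' _ => sumr_ge0 _ (term_ge0 i')) sum0 (i := i) isT.
have /eqP := psumr_eq0P (term_ge0 i) row0 Pij.
by rewrite mulf_eq0 gt_eqF ?w_gt0 // => /eqP.
Qed.

Definition var_diff (R : nzRingType) K (C : 'M[R]_K) (j k : 'I_K) : R :=
  C j j + C k k - 2 * C j k.

Section Groups.

Variables (R : realFieldType) (p K : nat) (kk : 'I_p -> 'I_K).
Hypothesis Hgroups : forall k, exists a, kk a = k.

Local Notation G := (group_of kk).
Local Notation Bstar := (Bstar R kk).

Lemma card_group_gt0 k : (0 < #|G k|)%N.
Proof. by have [a <-] := Hgroups k; apply/card_gt0P; exists a; rewrite inE. Qed.

Lemma sum_by_group (F : 'I_p -> R) : \sum_a F a = \sum_k \sum_(a in G k) F a.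
Proof.
rewrite (partition_big kk predT) //=.
by apply: eq_bigr => k _; apply: eq_bigl => a; rewrite inE.
Qed.

Lemma latent_covE (C : 'M[R]_K) (gamma : 'I_K -> R) a b :
  latent_cov kk C gamma a b = C (kk a) (kk b) + (a == b)%:R * gamma (kk a).
Proof.
rewrite !mxE mulr_natl; congr (_ + _).
rewrite (eq_bigr (fun j => (kk b == j)%:R * C (kk a) j)) ?sum_delta // => j _.
rewrite !mxE mulrC; congr (_ * _).
by under eq_bigr do rewrite mxE; rewrite sum_delta.
Qed.

Lemma frob_latent_cov (C : 'M[R]_K) (gamma : 'I_K -> R) (M : 'M[R]_p) :
  frob (latent_cov kk C gamma) M =
  \sum_a \sum_b C (kk a) (kk b) * M a b + \sum_a gamma (kk a) * M a a.
Proof.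
rewrite frobE -big_split; apply: eq_bigr => a _.
under eq_bigr do rewrite latent_covE mulrDl -mulrA.
by rewrite big_split /= sum_delta.
Qed.

Lemma noise_mx_diag (gamma : 'I_K -> R) a : noise_mx kk gamma a a = gamma (kk a).
Proof. by rewrite !mxE eqxx mulr1n. Qed.

Lemma BstarE a b : Bstar a b = if kk a == kk b then #|G (kk a)|%:R^-1 else 0.
Proof. by rewrite mxE. Qed.

Lemma Bstar_ge0 a b : 0 <= Bstar a b.
Proof. by rewrite BstarE; case: ifP => // _; rewrite invr_ge0 ler0n. Qed.

Lemma trmx_Bstar : Bstar^T = Bstar.
Proof. by apply/matrixP => a b; rewrite mxE !BstarE eq_sym; case: eqP => // ->. Qed.

Lemma Bstar_sum_group a (F : 'I_p -> R) :
  \sum_b Bstar a b * F b = (\sum_(b in G (kk a)) F b) / #|G (kk a)|%:R.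
Proof.
rewrite mulr_suml (bigID (mem (G (kk a)))) /= [X in _ + X]big1 ?addr0 => [|b].
  by apply: eq_bigr => b; rewrite inE BstarE eq_sym => ->; rewrite mulrC.
by rewrite inE BstarE eq_sym => /negbTE->; rewrite mul0r.
Qed.

Lemma Bstar_row_sum a : \sum_b Bstar a b = 1.
Proof.
under eq_bigr do rewrite -[Bstar _ _]mulr1.
rewrite Bstar_sum_group sumr_const divff // pnatr_eq0 -lt0n.
exact: card_group_gt0.
Qed.

Lemma Bstar_col_sum b : \sum_a Bstar a b = 1.
Proof.
by rewrite -(Bstar_row_sum b); apply: eq_bigr => a _; rewrite -[in LHS]trmx_Bstar mxE.
Qed.

Lemma Bstar_idem : Bstar *m Bstar = Bstar.
Proof.
apply/matrixP => a b; rewrite mxE Bstar_sum_group.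
rewrite (eq_bigr (fun _ => Bstar a b)) => [|c]; last first.
  by rewrite inE !BstarE => /eqP->.
rewrite sumr_const -(mulr_natr (Bstar a b)) mulfK // pnatr_eq0 -lt0n.
exact: card_group_gt0.
Qed.

Lemma Bstar_group_trace k : \sum_(a in G k) Bstar a a = 1.
Proof.
rewrite (eq_bigr (fun _ => #|G k|%:R^-1)) => [|a]; last first.
  by rewrite inE BstarE eqxx => /eqP->.
rewrite sumr_const -(mulr_natl (#|G k|%:R^-1)) divff // pnatr_eq0 -lt0n.
exact: card_group_gt0.
Qed.

Lemma Bstar_trace : \tr Bstar = K%:R.
Proof.
rewrite /mxtrace sum_by_group; under eq_bigr do rewrite Bstar_group_trace.
by rewrite sumr_const card_ord.
Qed.

Lemma Bstar_in_Dset : in_Dset K Bstar.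
Proof.
split; last exact: Bstar_idem.
split; first exact: sym_idem_psd trmx_Bstar Bstar_idem.
by split; [exact: Bstar_col_sum | split; [exact: Bstar_ge0 | exact: Bstar_trace]].
Qed.

Lemma Bstar_block_weight (f : 'I_K -> 'I_K -> R) :
  \sum_a \sum_b f (kk a) (kk b) * Bstar a b = \sum_a f (kk a) (kk a).
Proof.
apply: eq_bigr => a _; rewrite -[RHS]mulr1 -(Bstar_row_sum a) mulr_sumr.
by apply: eq_bigr => b _; rewrite BstarE; case: eqP => [->|_]; rewrite ?mulr0.
Qed.

Lemma inv_card_group_le k : #|G k|%:R^-1 <= (min_group_size kk)%:R^-1 :> R.
Proof.
have [a _] := Hgroups k.
have m_le : (min_group_size kk <= #|G k|)%N.
  by apply: bigminn_le; rewrite mem_index_enum.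
have m_gt0 : (0 < min_group_size kk)%N.
  apply: (big_ind (fun n => 0 < n)%N) => [|x y x_gt0 y_gt0|j _].
  - exact: leq_ltn_trans (leq0n a) (ltn_ord a).
  - by rewrite leq_min x_gt0 y_gt0.
  - exact: card_group_gt0.
by rewrite lef_pV2 ?posrE ?ltr0n ?ler_nat // card_group_gt0.
Qed.

Section ProjectionInD.

Variable B : 'M[R]_p.
Hypotheses (Bsym : B^T = B) (Bidem : B *m B = B)
  (Bcol : forall b, \sum_a B a b = 1) (Btr : \tr B = K%:R)
  (Bge0 : forall a b, 0 <= B a b).

Lemma sum_group_trace_sub1 : \sum_k (\sum_(a in G k) B a a - 1) = 0.
Proof. by rewrite sumrB sumr_const card_ord -Btr /mxtrace sum_by_group subrr. Qed.

Lemma offmass_groups :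
  \sum_k offmass B (G k) = \sum_a \sum_(b | kk b != kk a) B a b.
Proof.
rewrite [RHS]sum_by_group; apply: eq_bigr => k _.
apply: eq_bigr => a; rewrite inE => /eqP <-.
by apply: eq_bigl => b; rewrite !inE.
Qed.

Lemma cov_gap (C : 'M[R]_K) : C^T = C ->
  \sum_a \sum_b C (kk a) (kk b) * Bstar a b - \sum_a \sum_b C (kk a) (kk b) * B a b =
  \sum_a \sum_(b | kk b != kk a) var_diff C (kk a) (kk b) / 2 * B a b.
Proof.
move=> Csym; rewrite Bstar_block_weight.
rewrite (sym_weight_gap Bsym Bcol (f := fun a b => C (kk a) (kk b))) /=; last first.
  by move=> a b; rewrite -{1}Csym mxE.
apply: eq_bigr => a _; rewrite (bigID (fun b => kk b != kk a)) /=.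
rewrite [X in _ + X]big1 ?addr0 // => b /negPn/eqP->.
by rewrite /var_diff; ring.
Qed.

Lemma noise_gap (gamma : 'I_K -> R) (g V mu : R) :
  (forall k, 0 <= g - gamma k <= V) -> (forall k, #|G k|%:R^-1 <= mu) ->
  - (V * mu * \sum_a \sum_(b | kk b != kk a) B a b) <=
  \sum_a gamma (kk a) * Bstar a a - \sum_a gamma (kk a) * B a a.
Proof.
move=> gamma_bd inv_le; set d := fun k => \sum_(a in G k) B a a - 1.
have -> : \sum_a gamma (kk a) * Bstar a a - \sum_a gamma (kk a) * B a a =
          \sum_k (g - gamma k) * d k.
  transitivity (\sum_k ((g - gamma k) * d k - g * d k)); last first.
    by rewrite sumrB -mulr_sumr sum_group_trace_sub1 mulr0 subr0.
  rewrite -sumrB sum_by_group; apply: eq_bigr => k _.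
  rewrite (eq_bigr (fun a => gamma k * (Bstar a a - B a a))) => [|a]; last first.
    by rewrite inE => /eqP->; rewrite mulrBr.
  by rewrite -mulr_sumr sumrB Bstar_group_trace /d; ring.
rewrite -offmass_groups mulr_sumr -sumrN; apply: ler_sum => k _.
have var_ge0 := block_variance_ge0 Bsym Bidem Bcol (card_group_gt0 k).
have o_ge0 : 0 <= offmass B (G k).
  by apply: sumr_ge0 => a _; apply: sumr_ge0 => b _.
have inv_ge0 : 0 <= #|G k|%:R^-1 :> R by rewrite invr_ge0 ler0n.
have [w_ge0 w_leV] := andP (gamma_bd k).
have V_ge0 : 0 <= V := le_trans w_ge0 w_leV.
have Vw_ge0 : 0 <= V - (g - gamma k) by rewrite subr_ge0.
have mu_inv_ge0 : 0 <= mu - #|G k|%:R^-1 by rewrite subr_ge0.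
(* (g - gamma_k) d_k >= -(g - gamma_k) o_k / |G_k| >= -V o_k / |G_k| >= -V mu o_k *)
have := mulr_ge0 w_ge0 var_ge0.
have := mulr_ge0 Vw_ge0 (mulr_ge0 o_ge0 inv_ge0).
have := mulr_ge0 (mulr_ge0 V_ge0 o_ge0) mu_inv_ge0.
rewrite /d; lra.
Qed.

Lemma frob_gap (C : 'M[R]_K) (gamma : 'I_K -> R) (g V mu : R) :
  C^T = C -> (forall k, 0 <= g - gamma k <= V) -> (forall k, #|G k|%:R^-1 <= mu) ->
  \sum_a \sum_(b | kk b != kk a) (var_diff C (kk a) (kk b) / 2 - V * mu) * B a b <=
  frob (latent_cov kk C gamma) Bstar - frob (latent_cov kk C gamma) B.
Proof.
move=> Csym gamma_bd inv_le; rewrite !frob_latent_cov.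
have := noise_gap gamma_bd inv_le; have := cov_gap Csym.
have -> : \sum_a \sum_(b | kk b != kk a) (var_diff C (kk a) (kk b) / 2 - V * mu) * B a b =
    \sum_a \sum_(b | kk b != kk a) var_diff C (kk a) (kk b) / 2 * B a b -
    V * mu * \sum_a \sum_(b | kk b != kk a) B a b.
  rewrite mulr_sumr -sumrB; apply: eq_bigr => a _.
  by rewrite mulr_sumr -sumrB; apply: eq_bigr => b _; rewrite mulrBl.
lra.
Qed.

Lemma block_diagonal_Bstar : (forall a b, kk a != kk b -> B a b = 0) -> B = Bstar.
Proof.
move=> Boff.
have offmass0 k : offmass B (G k) = 0.
  apply: big1 => a; rewrite inE => /eqP ak; apply: big1 => b.
  by rewrite !inE -ak eq_sym; apply: Boff.
have trace_group1 k : \sum_(a in G k) B a a - 1 = 0.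
  apply: (psumr_eq0P _ sum_group_trace_sub1) => // j _.
  have := block_variance_ge0 Bsym Bidem Bcol (card_group_gt0 j).
  by rewrite offmass0 mul0r addr0.
have row_group1 c : \sum_(b in G (kk c)) B c b = 1.
  rewrite -(row_sum1 Bsym Bcol c) [RHS](bigID (mem (G (kk c)))) /=.
  by rewrite [X in _ = _ + X]big1 ?addr0 // => b; rewrite inE eq_sym; apply: Boff.
apply/matrixP => c a; rewrite BstarE; case: eqP => [ca|/eqP]; last exact: Boff.
rewrite (block_variance_eq0 Bsym Bidem Bcol (card_group_gt0 (kk a))) ?inE //.
  by rewrite -ca row_group1 mul1r.
by rewrite offmass0 mul0r addr0 trace_group1.
Qed.

End ProjectionInD.

End Groups.

Theorem mainTheorem2 (R : realFieldType) (p K : nat) (kk : 'I_p -> 'I_K)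
    (C : 'M[R]_K) (gamma : 'I_K -> R)
    (Hgroups : forall k : 'I_K, exists a : 'I_p, kk a = k)
    (HC : psd C)
    (Hgamma : forall k, 0 <= gamma k)
    (HDelta : forall j k : 'I_K, j != k ->
       2 / (min_group_size kk)%:R * var_seminorm (noise_mx kk gamma)
         < C j j + C k k - 2 * C j k) :
  let Sigma := latent_cov kk C gamma in
  in_Dset K (Bstar R kk) /\
  (forall B, in_Dset K B -> frob Sigma B <= frob Sigma (Bstar R kk)) /\
  (forall B, in_Dset K B -> frob Sigma B = frob Sigma (Bstar R kk) -> B = Bstar R kk).
Proof.
move=> Sigma; set V := var_seminorm (noise_mx kk gamma).
set mu := (min_group_size kk)%:R^-1 : R.
set gap := fun B : 'M[R]_p =>
  \sum_a \sum_(b | kk b != kk a) (var_diff C (kk a) (kk b) / 2 - V * mu) * B a b.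
have weight_gt0 a b : kk b != kk a -> 0 < var_diff C (kk a) (kk b) / 2 - V * mu.
  by rewrite eq_sym => /HDelta; rewrite /var_diff /mu -/V; lra.
have [g noise_bd] := var_seminorm_diag (noise_mx kk gamma).
have gamma_bd k : 0 <= g - gamma k <= V.
  by have [a <-] := Hgroups k; rewrite -noise_mx_diag noise_bd.
have gap_le B : in_Dset K B -> gap B <= frob Sigma (Bstar R kk) - frob Sigma B.
  move=> [[[Bsym _] [Bcol [Bge0 Btr]]] Bidem].
  exact: (frob_gap Hgroups Bsym Bidem Bcol Btr Bge0 HC.1 gamma_bd
    (inv_card_group_le R Hgroups)).
have gap_ge0 B : in_Dset K B -> 0 <= gap B.
  move=> [[_ [_ [Bge0 _]]] _]; apply: sumr_ge0 => a _; apply: sumr_ge0 => b ba.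
  by rewrite mulr_ge0 // ltW // weight_gt0.
split; first exact: Bstar_in_Dset.
split=> [B DB | B DB eq_frob]; first by have := gap_le B DB; have := gap_ge0 B DB; lra.
have := gap_le B DB; rewrite eq_frob subrr => gap_le0.
case: DB => [[[Bsym _] [Bcol [Bge0 Btr]]] Bidem].
have Boff := weighted_sum_le0_eq0 weight_gt0 Bge0 gap_le0.
apply: (block_diagonal_Bstar Hgroups Bsym Bidem Bcol Btr) => a b ab.
by apply: Boff; rewrite eq_sym.
Qed.
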